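(* Let $(x_n)$ be a nonincreasing interval-filling sequence of positive reals with cardinal function $f$, and suppose there are indices $k<m$ such that $x_m<r_m$ and $x_k+x_m<r_k$. Then there exists $y\in\mathcal{A}((x_n))$ with $f(y)\ge4$ (with $\omega,\mathfrak{c}$ counting as $\ge4$).
   Context: For a summable sequence $\mathbf{x}=(x_n)$ of positive reals, $\mathcal{A}(\mathbf{x})=\{\sum_{n\in A}x_n: A\subseteq\mathbb{N}\}$ is its achievement set and its cardinal function $f$ assigns to $x\in\mathcal{A}(\mathbf{x})$ the cardinality (a positive integer, $\omega$, or $\mathfrak{c}$) of $\{(\varepsilon_n)\in\{0,1\}^{\mathbb{N}}:\sum\varepsilon_nx_n=x\}$. The sequence is interval-filling if $\mathcal{A}(\mathbf{x})$ is an interval. The tail sums are $r_n=\sum_{k=n+1}^\infty x_k$. *)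

From Stdlib Require Import Reals.
From Coquelicot Require Import Coquelicot.
Open Scope R_scope.

(* Sequences are indexed by nat (starting at 0); the shift from the paper's
   indexing starting at 1 is immaterial. *)

Definition is_rep (x : nat -> R) (eps : nat -> bool) (y : R) : Prop :=
  is_series (fun n => if eps n then x n else 0) y.

Definition achievement_set (x : nat -> R) : R -> Prop :=
  fun y => exists eps : nat -> bool, is_rep x eps y.

Definition interval_filling (x : nat -> R) : Prop :=
  forall a b c, achievement_set x a -> achievement_set x b ->
    a <= c <= b -> achievement_set x c.

Definition tail (x : nat -> R) (n : nat) : R :=
  Series (fun k => x (n + 1 + k)%nat).

Definition seq_differ (e1 e2 : nat -> bool) : Prop := exists n, e1 n <> e2 n.

Definition card_fun_ge4 (x : nat -> R) (y : R) : Prop :=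
  exists e1 e2 e3 e4 : nat -> bool,
    is_rep x e1 y /\ is_rep x e2 y /\ is_rep x e3 y /\ is_rep x e4 y /\
    seq_differ e1 e2 /\ seq_differ e1 e3 /\ seq_differ e1 e4 /\
    seq_differ e2 e3 /\ seq_differ e2 e4 /\ seq_differ e3 e4.

(* Interval filling together with monotonicity gives Kakeya's condition x_n <= r_n, so
   every v in [0, r_n] has a greedy expansion using only indices > n.  For y in
   [x_k + x_m, x_k + r_m] this yields two expansions of y containing k, namely
   {k, m} + greedy(y - x_k - x_m) and {k} + greedy(y - x_k), the second avoiding m.
   If moreover y = s + x_p with s a finite sum over indices in (k, p), then
   replacing x_p by its greedy expansion beyond p gives two expansions of y avoiding k.
   Such y exist: x_k + x_m < min(x_k + r_m, r_k), and the sums s + x_p obtained by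
   truncating greedy expansions are dense in [0, r_k]. *)

From Stdlib Require Import Reals Lra Lia Classical.
From Coquelicot Require Import Coquelicot.
Open Scope R_scope.

Lemma is_series_zero : is_series (fun _ : nat => 0) 0.
Proof.
  cut (is_lim_seq (sum_n (fun _ : nat => 0)) 0); [intro H; exact H|].
  apply (is_lim_seq_ext (fun _ => 0)); [|apply is_lim_seq_const].
  intros n. rewrite sum_n_const. ring.
Qed.

Lemma is_series_decr_1_0 (a : nat -> R) (l : R) :
  a 0%nat = 0 -> is_series (fun k => a (S k)) l -> is_series a l.
Proof.
  intros Ha0 Ha. apply is_series_decr_1. rewrite Ha0.
  change (is_series (fun k => a (S k)) (l - 0)). rewrite Rminus_0_r. exact Ha.
Qed.

Lemma is_series_single (p : nat) (c : R) :
  is_series (fun j => if Nat.eqb j p then c else 0) c.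
Proof.
  induction p as [|p IHp].
  - apply is_series_decr_1. simpl.
    change (is_series (fun _ : nat => 0) (c - c)). rewrite Rminus_diag.
    exact is_series_zero.
  - exact (is_series_decr_1_0 _ _ eq_refl IHp).
Qed.

Lemma is_series_drop (a : nat -> R) (n : nat) (l : R) :
  is_series (fun k => a (S n + k)%nat) l ->
  is_series (fun j => if Nat.ltb n j then a j else 0) l.
Proof.
  revert a. induction n as [|n IHn]; intros a Ha; apply is_series_decr_1_0; try reflexivity.
  - exact Ha.
  - exact (IHn (fun j => a (S j)) Ha).
Qed.

Section Representations.

Variable x : nat -> R.
Hypothesis x_ge0 : forall n, 0 <= x n.
Hypothesis x_summable : ex_series x.

Lemma is_rep_nil : is_rep x (fun _ => false) 0.
Proof. exact is_series_zero. Qed.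

Lemma is_rep_single (p : nat) : is_rep x (fun j => Nat.eqb j p) (x p).
Proof.
  unfold is_rep. apply (is_series_ext (fun j => if Nat.eqb j p then x p else 0));
    [|apply is_series_single].
  intros j. destruct (Nat.eqb_spec j p); [subst|]; reflexivity.
Qed.

Lemma ex_rep (e : nat -> bool) : exists s, is_rep x e s.
Proof.
  exists (Series (fun j => if e j then x j else 0)). apply Series_correct.
  apply (ex_series_le (fun j => if e j then x j else 0) x); [|exact x_summable].
  intros n. change (Rabs (if e n then x n else 0) <= x n).
  specialize (x_ge0 n). destruct (e n); rewrite Rabs_pos_eq; lra.
Qed.

Lemma is_rep_le (e1 e2 : nat -> bool) (a b : R) :
  (forall j, e1 j = true -> e2 j = true) -> is_rep x e1 a -> is_rep x e2 b -> a <= b.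
Proof.
  intros Hsub H1 H2.
  rewrite <- (is_series_unique _ _ H1), <- (is_series_unique _ _ H2).
  apply Series_le; [|exists b; exact H2].
  intros n. specialize (x_ge0 n). specialize (Hsub n).
  destruct (e1 n), (e2 n); try lra; discriminate (Hsub eq_refl).
Qed.

Lemma is_rep_ge0 (e : nat -> bool) (s : R) : is_rep x e s -> 0 <= s.
Proof. apply (is_rep_le (fun _ => false)); [discriminate|exact is_rep_nil]. Qed.

Lemma is_rep_term_le (e : nat -> bool) (s : R) (j : nat) :
  is_rep x e s -> e j = true -> x j <= s.
Proof.
  intros Hs Hj. apply (is_rep_le (fun i => Nat.eqb i j) e); [|apply is_rep_single|exact Hs].
  intros i Hi. apply Nat.eqb_eq in Hi. subst i. exact Hj.
Qed.

Lemma is_rep_union (e1 e2 : nat -> bool) (a b : R) :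
  (forall j, e1 j = true -> e2 j = false) -> is_rep x e1 a -> is_rep x e2 b ->
  is_rep x (fun j => orb (e1 j) (e2 j)) (a + b).
Proof.
  intros Hdisj H1 H2.
  apply (is_series_ext (fun n => plus (if e1 n then x n else 0) (if e2 n then x n else 0)));
    [|exact (is_series_plus _ _ _ _ H1 H2)].
  intros n. change ((if e1 n then x n else 0) + (if e2 n then x n else 0) =
    (if orb (e1 n) (e2 n) then x n else 0)).
  specialize (Hdisj n).
  destruct (e1 n); [rewrite Hdisj by reflexivity|]; simpl; destruct (e2 n); ring.
Qed.

Lemma is_rep_tail (n : nat) : is_rep x (fun j => Nat.ltb n j) (tail x n).
Proof.
  apply is_series_drop. unfold tail.
  rewrite (Series_ext _ (fun k => x (S n + k)%nat)) by (intros k; f_equal; lia).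
  apply Series_correct, (ex_series_incr_n x (S n)), x_summable.
Qed.

Lemma tail_ge0 (n : nat) : 0 <= tail x n.
Proof. exact (is_rep_ge0 _ _ (is_rep_tail n)). Qed.

Lemma tail_eq (n : nat) : tail x n = Series x - sum_n x n.
Proof.
  rewrite (Series_incr_n x (S n)) by (lia || exact x_summable).
  change (Init.Nat.pred (S n)) with n. unfold tail.
  rewrite (Series_ext _ (fun k => x (S n + k)%nat)) by (intros k; f_equal; lia).
  rewrite sum_n_Reals. ring.
Qed.

Lemma tail_S (n : nat) : tail x n = x (S n) + tail x (S n).
Proof.
  rewrite !tail_eq, sum_Sn.
  change (Series x - sum_n x n = x (S n) + (Series x - (sum_n x n + x (S n)))). ring.
Qed.

Lemma tail_cvg0 : is_lim_seq (tail x) 0.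
Proof.
  apply (is_lim_seq_ext (fun n => Series x - sum_n x n)); [intros n; symmetry; apply tail_eq|].
  rewrite <- (Rminus_diag (Series x)).
  apply is_lim_seq_minus'; [apply is_lim_seq_const|exact (Series_correct _ x_summable)].
Qed.

Lemma tail_eventually_lt (eps : R) (n0 : nat) : 0 < eps ->
  exists N, (n0 <= N)%nat /\ tail x N < eps.
Proof.
  intros Heps. destruct (proj2 (is_lim_seq_spec _ _) tail_cvg0 (mkposreal eps Heps)) as [N0 HN0].
  exists (n0 + N0)%nat. split; [lia|].
  specialize (HN0 (n0 + N0)%nat ltac:(lia)). simpl in HN0.
  rewrite Rminus_0_r in HN0. pose proof (Rle_abs (tail x (n0 + N0))). lra.
Qed.

Lemma interval_filling_term_le_tail :
  (forall n, x (S n) <= x n) -> interval_filling x -> forall n, x n <= tail x n.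
Proof.
  intros Hdec Hif n. destruct (Rle_lt_dec (x n) (tail x n)) as [Hle|Hlt]; [exact Hle|exfalso].
  destruct (Hif (tail x n) (x n) ((tail x n + x n) / 2)) as [e He].
  - exists (fun j => Nat.ltb n j). apply is_rep_tail.
  - exists (fun j => Nat.eqb j n). apply is_rep_single.
  - lra.
  - destruct (classic (exists j, (j <= n)%nat /\ e j = true)) as [[j [Hjn Hj]]|Hnone].
    + pose proof (is_rep_term_le e _ j He Hj). pose proof (decreasing_prop x j n Hdec Hjn).
      lra.
    + enough ((tail x n + x n) / 2 <= tail x n) by lra.
      apply (is_rep_le e (fun j => Nat.ltb n j)); [|exact He|apply is_rep_tail].
      intros j Hj. apply Nat.ltb_lt. destruct (Nat.le_gt_cases j n) as [Hjn|Hjn]; [|exact Hjn].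
      exfalso. apply Hnone. exists j. split; assumption.
Qed.

Section Greedy.

Hypothesis x_le_tail : forall n, x n <= tail x n.

Definition greedy_take (n : nat) (r : R) (j : nat) : bool :=
  andb (Nat.ltb n j) (if Rle_dec (x j) r then true else false).

(* [greedy_rem n v j] is what remains of [v] once the indices [< j] are decided. *)
Fixpoint greedy_rem (n : nat) (v : R) (j : nat) : R :=
  match j with
  | O => v
  | S j => let r := greedy_rem n v j in if greedy_take n r j then r - x j else r
  end.

Definition greedy (n : nat) (v : R) (j : nat) : bool := greedy_take n (greedy_rem n v j) j.

Lemma greedy_support (n : nat) (v : R) (j : nat) : greedy n v j = true -> (n < j)%nat.
Proof. unfold greedy, greedy_take. intros H. apply andb_prop in H. apply Nat.ltb_lt, H. Qed.

Lemma greedy_rem_S (n : nat) (v : R) (j : nat) :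
  greedy_rem n v (S j) = if greedy n v j then greedy_rem n v j - x j else greedy_rem n v j.
Proof. reflexivity. Qed.

Lemma greedy_rem_bounds (n : nat) (v : R) : 0 <= v <= tail x n ->
  forall j, 0 <= greedy_rem n v (S j) <= tail x (Nat.max n j).
Proof.
  intros Hv. induction j as [|j IHj].
  - rewrite Nat.max_0_r. exact Hv.
  - rewrite greedy_rem_S. unfold greedy, greedy_take.
    destruct (Nat.ltb_spec n (S j)) as [Hnj|Hnj]; cbn [andb].
    + rewrite Nat.max_r in IHj |- * by lia.
      pose proof (tail_S j). pose proof (x_le_tail (S j)).
      destruct Rle_dec; lra.
    + rewrite Nat.max_l in IHj |- * by lia. exact IHj.
Qed.

Lemma greedy_partial_sum (n : nat) (v : R) (p : nat) :
  sum_n (fun j => if greedy n v j then x j else 0) p = v - greedy_rem n v (S p).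
Proof.
  induction p as [|p IHp].
  - rewrite sum_O, greedy_rem_S. destruct (greedy n v 0); simpl; ring.
  - rewrite sum_Sn, IHp, (greedy_rem_S n v (S p)).
    change (v - greedy_rem n v (S p) + (if greedy n v (S p) then x (S p) else 0) =
      v - (if greedy n v (S p) then greedy_rem n v (S p) - x (S p) else greedy_rem n v (S p))).
    destruct (greedy n v (S p)); ring.
Qed.

Lemma is_rep_greedy (n : nat) (v : R) : 0 <= v <= tail x n -> is_rep x (greedy n v) v.
Proof.
  intros Hv.
  assert (Hrem : is_lim_seq (fun p => greedy_rem n v (S p)) 0).
  { apply (is_lim_seq_le_le_loc (fun _ => 0) _ (tail x));
      [|apply is_lim_seq_const|apply tail_cvg0].
    exists n. intros p Hp.
    pose proof (greedy_rem_bounds n v Hv p) as Hbd. rewrite Nat.max_r in Hbd by exact Hp.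
    exact Hbd. }
  cut (is_lim_seq (sum_n (fun j => if greedy n v j then x j else 0)) v); [intro H; exact H|].
  apply (is_lim_seq_ext (fun p => v - greedy_rem n v (S p)));
    [intros p; symmetry; apply greedy_partial_sum|].
  pose proof (is_lim_seq_minus' _ _ v 0 (is_lim_seq_const v) Hrem) as H.
  rewrite Rminus_0_r in H. exact H.
Qed.

Lemma finite_rep_plus_term_dense (n : nat) (a b : R) : 0 <= a < b -> b <= tail x n ->
  exists p e s, (n < p)%nat /\ (forall j, e j = true -> (n < j < p)%nat) /\ is_rep x e s /\
    a < s + x p < b.
Proof.
  intros Hab Hb.
  set (v := (a + b) / 2).
  destruct (tail_eventually_lt ((b - a) / 2) n) as [N [HnN HN]]; [lra|].
  set (low := fun j => andb (greedy n v j) (Nat.leb j N)).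
  destruct (ex_rep low) as [s Hs].
  assert (Hv : is_rep x (greedy n v) v) by (apply is_rep_greedy; unfold v; lra).
  assert (Hsv : s <= v).
  { apply (is_rep_le low (greedy n v)); [|exact Hs|exact Hv].
    intros j Hj. apply andb_prop in Hj. apply Hj. }
  assert (Hvs : v <= s + tail x N).
  { apply (is_rep_le (greedy n v) (fun j => orb (low j) (Nat.ltb N j))); [| exact Hv|].
    - intros j Hj. unfold low. rewrite Hj. simpl.
      destruct (Nat.leb_spec j N) as [_|HNj]; [reflexivity|]. apply Nat.ltb_lt. exact HNj.
    - apply is_rep_union; [|exact Hs|apply is_rep_tail].
      intros j Hj. apply andb_prop in Hj as [_ Hj]. apply Nat.leb_le in Hj.
      apply Nat.ltb_ge. exact Hj. }
  pose proof (tail_S N). pose proof (tail_ge0 (S N)). pose proof (x_ge0 (S N)).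
  exists (S N), low, s. split; [lia|split; [|split; [exact Hs|unfold v in *; lra]]].
  intros j Hj. apply andb_prop in Hj as [Hj HjN]. apply greedy_support in Hj.
  apply Nat.leb_le in HjN. lia.
Qed.

Lemma two_reps_containing (n m : nat) (y : R) : (n < m)%nat ->
  x n + x m <= y <= x n + tail x m ->
  exists e1 e2, is_rep x e1 y /\ is_rep x e2 y /\ e1 n = true /\ e2 n = true /\
    seq_differ e1 e2.
Proof.
  intros Hnm Hy. pose proof (x_ge0 m).
  set (G1 := greedy m (y - x n - x m)). set (G2 := greedy m (y - x n)).
  assert (HG1 : forall j, G1 j = true -> (m < j)%nat) by apply greedy_support.
  assert (HG2 : forall j, G2 j = true -> (m < j)%nat) by apply greedy_support.
  exists (fun j => orb (Nat.eqb j n) (orb (Nat.eqb j m) (G1 j))),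
    (fun j => orb (Nat.eqb j n) (G2 j)).
  rewrite Nat.eqb_refl. repeat split.
  - replace y with (x n + (x m + (y - x n - x m))) by ring.
    apply is_rep_union; [|apply is_rep_single|apply is_rep_union].
    + intros j Hj. apply Nat.eqb_eq in Hj. subst j.
      destruct (Nat.eqb_spec n m); [lia|]. simpl.
      destruct (G1 n) eqn:E; [apply HG1 in E; lia|reflexivity].
    + intros j Hj. apply Nat.eqb_eq in Hj. subst j.
      destruct (G1 m) eqn:E; [apply HG1 in E; lia|reflexivity].
    + apply is_rep_single.
    + apply is_rep_greedy. lra.
  - replace y with (x n + (y - x n)) by ring.
    apply is_rep_union; [|apply is_rep_single|apply is_rep_greedy; lra].
    intros j Hj. apply Nat.eqb_eq in Hj. subst j.
    destruct (G2 n) eqn:E; [apply HG2 in E; lia|reflexivity].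
  - exists m. rewrite Nat.eqb_refl. destruct (Nat.eqb_spec m n); [lia|]. simpl.
    destruct (G2 m) eqn:E; [apply HG2 in E; lia|discriminate].
Qed.

Lemma two_reps_plus_term (e : nat -> bool) (s : R) (p : nat) :
  (forall j, e j = true -> (j < p)%nat) -> is_rep x e s ->
  exists e3 e4, is_rep x e3 (s + x p) /\ is_rep x e4 (s + x p) /\
    (forall j, (j < p)%nat -> e3 j = e j /\ e4 j = e j) /\ seq_differ e3 e4.
Proof.
  intros He Hs. set (C := greedy p (x p)).
  assert (HC : forall j, C j = true -> (p < j)%nat) by apply greedy_support.
  assert (Hdisj : forall f : nat -> bool, (forall j, f j = true -> (p <= j)%nat) ->
    forall j, e j = true -> f j = false).
  { intros f Hf j Hj. apply He in Hj. destruct (f j) eqn:E; [apply Hf in E; lia|reflexivity]. }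
  exists (fun j => orb (e j) (Nat.eqb j p)), (fun j => orb (e j) (C j)). repeat split.
  - apply is_rep_union; [|exact Hs|apply is_rep_single].
    apply Hdisj. intros j Hj. apply Nat.eqb_eq in Hj. lia.
  - apply is_rep_union; [|exact Hs|apply is_rep_greedy; split; [apply x_ge0|apply x_le_tail]].
    apply Hdisj. intros j Hj. apply HC in Hj. lia.
  - destruct (Nat.eqb_spec j p); [lia|]. apply Bool.orb_false_r.
  - destruct (C j) eqn:E; [apply HC in E; lia|]. apply Bool.orb_false_r.
  - exists p. rewrite Nat.eqb_refl.
    destruct (e p) eqn:E; [apply He in E; lia|]. simpl.
    destruct (C p) eqn:E'; [apply HC in E'; lia|discriminate].
Qed.

End Greedy.

End Representations.

Lemma card_fun_ge4_of_two_pairs (x : nat -> R) (y : R) (e1 e2 e3 e4 : nat -> bool) (j : nat) :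
  is_rep x e1 y -> is_rep x e2 y -> is_rep x e3 y -> is_rep x e4 y ->
  e1 j = true -> e2 j = true -> e3 j = false -> e4 j = false ->
  seq_differ e1 e2 -> seq_differ e3 e4 -> card_fun_ge4 x y.
Proof.
  intros H1 H2 H3 H4 E1 E2 E3 E4 D12 D34.
  exists e1, e2, e3, e4.
  repeat split; try assumption; exists j; congruence.
Qed.

Theorem theorem4p13 (x : nat -> R)
  (hpos : forall n, 0 < x n)
  (hsum : ex_series x)
  (hnoninc : forall n, x (S n) <= x n)
  (hif : interval_filling x)
  (k m : nat) (hkm : (k < m)%nat)
  (hm : x m < tail x m)
  (hk : x k + x m < tail x k) :
  exists y, achievement_set x y /\ card_fun_ge4 x y.
Proof.
  assert (hge0 : forall n, 0 <= x n) by (intros n; apply Rlt_le, hpos).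
  pose proof (interval_filling_term_le_tail x hge0 hsum hnoninc hif) as hkakeya.
  set (b := Rmin (x k + tail x m) (tail x k)).
  destruct (finite_rep_plus_term_dense x hge0 hsum hkakeya k (x k + x m) b)
    as (p & e & s & Hkp & He & Hs & Hy).
  { pose proof (hge0 k). pose proof (hge0 m). unfold b. split; [lra|apply Rmin_case; lra]. }
  { apply Rmin_r. }
  destruct (two_reps_containing x hge0 hsum hkakeya k m (s + x p) hkm)
    as (e1 & e2 & H1 & H2 & E1 & E2 & D12).
  { assert (b <= x k + tail x m) by apply Rmin_l. lra. }
  destruct (two_reps_plus_term x hge0 hsum hkakeya e s p) as (e3 & e4 & H3 & H4 & Hbelow & D34).
  { intros j Hj. apply He in Hj. lia. }
  { exact Hs. }
  assert (Ek : e k = false) by (destruct (e k) eqn:E; [apply He in E; lia|reflexivity]).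
  destruct (Hbelow k Hkp) as [E3 E4].
  exists (s + x p). split; [exists e3; exact H3|].
  apply (card_fun_ge4_of_two_pairs x _ e1 e2 e3 e4 k); congruence || assumption.
Qed.
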